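(* Let $G$ be a graph of order $n$ with a clique partition $F=\{C_1,\dots,C_k\}$ with $k>n$, where $s_i^F=|C_i|$ ordered $s_1^F\ge\cdots\ge s_k^F$, and let $P_G$ be the clique partition graph of $G$ with respect to $F$, with adjacency eigenvalues $\lambda_1(P_G)\ge\cdots\ge\lambda_k(P_G)$. Then (i) $-s_1^F\le\lambda_i(P_G)\le -s_k^F$ for $n+1\le i\le k$; (ii) $\nu^-(P_G)\ge k-n$, where $\nu^-(P_G)$ is the number of negative adjacency eigenvalues of $P_G$.
   Context: All graphs are finite and simple. A clique partition of $G$ is a set $F$ of cliques (sets of pairwise adjacent vertices) such that every edge lies in exactly one clique of $F$. The clique partition graph $P_G$ has vertex set $\{1,\dots,k\}$ (vertex $i$ corresponding to $C_i$), with $i\ne j$ adjacent iff $C_i\cap C_j\neq\emptyset$. *)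

From HB Require Import structures.
From mathcomp Require Import all_boot all_order all_algebra.
From mathcomp Require Import reals.
Set Implicit Arguments. Unset Strict Implicit. Unset Printing Implicit Defensive.
Import Order.TTheory GRing.Theory Num.Theory.
Local Open Scope ring_scope.

Definition simple_graph (T : finType) (e : rel T) : Prop :=
  symmetric e /\ irreflexive e.

Definition is_clique (T : finType) (e : rel T) (C : {set T}) : Prop :=
  C != set0 /\ {in C &, forall x y, x != y -> e x y}.

Definition is_clique_partition (T : finType) (e : rel T) (F : seq {set T}) : Prop :=
  [/\ uniq F, (forall C, C \in F -> is_clique e C)
    & forall x y, e x y -> count (fun C : {set T} => (x \in C) && (y \in C)) F = 1%N].

(* Adjacency matrix of the clique partition graph P_G w.r.t. F:
   i ~ j iff i <> j and C_i, C_j intersect. *)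
Definition cp_adj (R : nzRingType) (T : finType) (F : seq {set T}) :
  'M[R]_(size F) :=
  \matrix_(i < size F, j < size F)
    ((i != j) && (nth set0 F i :&: nth set0 F j != set0))%:R.

From HB Require Import structures.
From mathcomp Require Import all_boot all_order all_algebra.
From mathcomp Require Import reals sesquilinear spectral.
From mathcomp.real_closed Require Import complex.
Import Order.TTheory GRing.Theory Num.Theory.
Set Implicit Arguments. Unset Strict Implicit. Unset Printing Implicit Defensive.
Local Open Scope ring_scope.
Local Open Scope sesquilinear_scope.

(* Let N be the k x n clique-vertex incidence matrix and D = diag(s_1, ..., s_k).
   Since distinct cliques of a clique partition share at most one vertex,
   A + D = N N^T for the adjacency matrix A of P_G, so w^*(A + D)w is nonnegative
   and vanishes on ker N^T.  For a unit eigenvector w of A with eigenvalue l this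
   gives 0 <= l + w^*Dw <= l + s_1.  If more than n eigenvalues exceeded -s_k, some
   nonzero combination w of their eigenvectors would lie in ker N^T, which has
   codimension at most n, and then 0 = w^*Aw + w^*Dw > -s_k|w|^2 + s_k|w|^2 = 0.
   Sorting gives (i), and s_k >= 1 makes the last k - n eigenvalues negative. *)

Lemma kermx_row_supported (F : fieldType) k m (M : 'M[F]_(k, m)) (J : {set 'I_k}) :
  (m < #|J|)%N ->
  exists2 a : 'rV[F]_k, a != 0 & a *m M = 0 /\ {in ~: J, forall j, a 0 j = 0}.
Proof.
move=> m_lt_J; pose f : 'I_#|J| -> 'I_k := enum_val.
pose b := nz_row (kermx (rowsub f M)).
have b_nz : b != 0.
  rewrite nz_row_eq0 -mxrank_eq0 mxrank_ker subn_eq0 -ltnNge.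
  exact: leq_ltn_trans (rank_leq_col _) m_lt_J.
have bM : b *m rowsub f M = 0 by apply/sub_kermxP/nz_row_sub.
pose a := b *m rowsub f 1%:M.
have aE j : a 0 j = \sum_r b 0 r * (f r == j)%:R.
  by rewrite mxE; apply: eq_bigr => r _; rewrite !mxE.
exists a; last split.
- apply: contraNneq b_nz => a0; apply/eqP/rowP => r.
  have := congr1 (fun v : 'rV_k => v 0 (f r)) a0.
  rewrite /= aE mxE (bigD1 r) //= eqxx mulr1 big1 ?addr0 ?mxE // => r' r'r.
  by rewrite (inj_eq enum_val_inj) (negbTE r'r) mulr0.
- by rewrite -mulmxA -rowsubE.
- move=> j; rewrite inE => jJ; rewrite aE big1 // => r _.
  rewrite (_ : f r == j = false) ?mulr0 //.
  by apply: contraNF jJ => /eqP <-; exact: enum_valP.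
Qed.

Lemma char_poly_similar (R : comUnitRingType) k (P B : 'M[R]_k) :
  P \in unitmx -> char_poly (invmx P *m B *m P) = char_poly B.
Proof.
move=> P_unit; rewrite /char_poly /char_poly_mx.
have -> : 'X%:M - map_mx polyC (invmx P *m B *m P) =
    map_mx polyC (invmx P) *m ('X%:M - map_mx polyC B) *m map_mx polyC P.
  rewrite mulmxBr mulmxBl !map_mxM; congr (_ - _).
  by rewrite mul_mx_scalar -scalemxAl -map_mxM mulVmx // map_mx1 scale_scalar_mx mulr1.
by rewrite !det_mulmx mulrAC -det_mulmx -map_mxM mulVmx // map_mx1 det1 mul1r.
Qed.

Section QuadForm.
Variable C : numClosedFieldType.

Definition quad_form n (M : 'M[C]_n) (w : 'rV[C]_n) : C := (w *m M *m w ^t*) 0 0.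

Lemma quad_formD n (M1 M2 : 'M[C]_n) w :
  quad_form (M1 + M2) w = quad_form M1 w + quad_form M2 w.
Proof. by rewrite /quad_form mulmxDr mulmxDl mxE. Qed.

Lemma quad_form_diag n (c w : 'rV[C]_n) :
  quad_form (diag_mx c) w = \sum_j c 0 j * `|w 0 j| ^+ 2.
Proof.
rewrite /quad_form mul_mx_diag mxE; apply: eq_bigr => j _.
by rewrite !mxE normCK mulrAC mulrC.
Qed.

Lemma quad_form_gram n m (N : 'M[C]_(n, m)) w :
  quad_form (N *m N ^t*) w = \sum_x `|(w *m N) 0 x| ^+ 2.
Proof.
rewrite /quad_form mulmxA -mulmxA -map_mxM -trmx_mul mxE.
by apply: eq_bigr => x _; rewrite !mxE normCK.
Qed.

Lemma quad_form_unitary n (P : 'M[C]_n) M a :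
  P \is unitarymx -> quad_form (P ^t* *m M *m P) (a *m P) = quad_form M a.
Proof. by move=> Pu; rewrite /quad_form trmx_mul map_mxM !mulmxA !mulmxtVK. Qed.

Lemma sum_sqr_norm_unitary n (P : 'M[C]_n) (a : 'rV[C]_n) :
  P \is unitarymx -> \sum_j `|(a *m P) 0 j| ^+ 2 = \sum_j `|a 0 j| ^+ 2.
Proof.
move=> Pu; rewrite -quad_form_gram (unitarymxP Pu).
have gram1 : (1%:M : 'M[C]_n) = 1%:M *m 1%:M ^t* by rewrite trmx1 map_mx1 mulmx1.
by rewrite gram1 quad_form_gram; under eq_bigr do rewrite mulmx1.
Qed.

End QuadForm.

Section SpectralGram.
Variables (C : numClosedFieldType) (k m : nat).
Variables (A : 'M[C]_k) (N : 'M[C]_(k, m)) (s d : 'rV[C]_k) (P : 'M[C]_k).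
Hypothesis A_gram : A + diag_mx s = N *m N ^t*.
Hypothesis P_unitary : P \is unitarymx.
Hypothesis A_spectral : A = P ^t* *m diag_mx d *m P.

Lemma spectral_gram_identity (a : 'rV[C]_k) :
  \sum_j d 0 j * `|a 0 j| ^+ 2 + \sum_j s 0 j * `|(a *m P) 0 j| ^+ 2
    = \sum_x `|(a *m P *m N) 0 x| ^+ 2.
Proof.
rewrite -!quad_form_diag -(quad_form_unitary _ _ P_unitary) -A_spectral.
by rewrite -quad_formD A_gram quad_form_gram.
Qed.

Lemma spectral_diag_ge smax i : (forall j, s 0 j <= smax) -> - smax <= d 0 i.
Proof.
move=> s_le; pose a : 'rV[C]_k := delta_mx 0 i.
have a_sqr j : `|a 0 j| ^+ 2 = (j == i)%:R.
  by rewrite mxE eqxx /=; case: (j == i); rewrite ?normr1 ?normr0 ?expr1n ?expr0n.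
have a_norm : \sum_j `|a 0 j| ^+ 2 = 1.
  by rewrite (bigD1 i) //= a_sqr eqxx big1 ?addr0 // => j /negbTE ji; rewrite a_sqr ji.
have a_d : \sum_j d 0 j * `|a 0 j| ^+ 2 = d 0 i.
  rewrite (bigD1 i) //= a_sqr eqxx mulr1 big1 ?addr0 // => j /negbTE ji.
  by rewrite a_sqr ji mulr0.
have s_part : \sum_j s 0 j * `|(a *m P) 0 j| ^+ 2 <= smax.
  apply: le_trans (_ : \sum_j smax * `|(a *m P) 0 j| ^+ 2 <= _).
    by apply: ler_sum => j _; rewrite ler_wpM2r ?exprn_ge0.
  by rewrite -mulr_sumr sum_sqr_norm_unitary // a_norm mulr1.
have : 0 <= d 0 i + smax.
  apply: le_trans (lerD (lexx _) s_part).
  by rewrite -a_d spectral_gram_identity sumr_ge0 // => x _; rewrite exprn_ge0.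
by move=> ge0; rewrite -subr_ge0 opprK.
Qed.

Lemma card_spectral_diag_gt smin :
  (forall j, smin <= s 0 j) -> (#|[set i | (- smin < d 0 i)%R]| <= m)%N.
Proof.
move=> s_ge; rewrite leqNgt; apply/negP.
move=> /(kermx_row_supported (P *m N)) [a a_nz [aPN a_supp]].
have d_gt j : a 0 j != 0 -> 0 < d 0 j + smin.
  move=> aj; have : j \in [set i | - smin < d 0 i].
    by apply: contraNT aj => jJ; rewrite a_supp ?in_setC.
  by rewrite inE -subr_gt0 opprK.
have term_ge0 j : 0 <= (d 0 j + smin) * `|a 0 j| ^+ 2.
  have [->|/d_gt/ltW] := eqVneq (a 0 j) 0; first by rewrite normr0 expr0n /= mulr0.
  by move=> ge0; rewrite mulr_ge0 ?exprn_ge0.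
have [j aj] : exists j, a 0 j != 0.
  apply/existsP; apply: contraNT a_nz; rewrite negb_exists => /forallP a0.
  by apply/eqP/rowP => j; rewrite mxE; apply/eqP; rewrite -[_ == _]negbK a0.
have pos : 0 < \sum_j (d 0 j + smin) * `|a 0 j| ^+ 2.
  rewrite (bigD1 j) //=; apply: ltr_wpDr; first exact: sumr_ge0.
  by rewrite mulr_gt0 ?d_gt ?exprn_gt0 ?normr_gt0.
suff : \sum_j (d 0 j + smin) * `|a 0 j| ^+ 2 <= 0 by rewrite (lt_geF pos).
have s_part : smin * \sum_j `|a 0 j| ^+ 2 <= \sum_j s 0 j * `|(a *m P) 0 j| ^+ 2.
  rewrite -(sum_sqr_norm_unitary _ P_unitary) mulr_sumr.
  by apply: ler_sum => x _; rewrite ler_wpM2r ?exprn_ge0.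
under eq_bigr do rewrite mulrDl; rewrite big_split /= -mulr_sumr.
apply: le_trans (lerD (lexx _) s_part) _.
rewrite spectral_gram_identity -mulmxA aPN.
by rewrite big1 // => x _; rewrite mxE normr0 expr0n.
Qed.

End SpectralGram.

Lemma char_poly_normalmx (C : numClosedFieldType) k (A : 'M[C]_k) :
  A \is normalmx -> char_poly A = \prod_(i < k) ('X - (spectral_diag A 0 i)%:P).
Proof.
move=> /orthomx_spectralP A_spectral.
rewrite {1}A_spectral char_poly_similar ?spectral_unit //.
rewrite char_poly_trig ?diag_mx_is_trig //.
by apply: eq_bigr => i _; rewrite mxE eqxx.
Qed.

Lemma gram_eigenvalue_bounds (C : numClosedFieldType) k m (A : 'M[C]_k)
    (N : 'M[C]_(k, m)) (s : 'rV[C]_k) (l : seq C) smin smax :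
  A \is normalmx -> A + diag_mx s = N *m N ^t* ->
  (forall j, smin <= s 0 j <= smax) ->
  char_poly A = \prod_(x <- l) ('X - x%:P) ->
  {in l, forall x, - smax <= x} /\ (count (fun x => (- smin < x)%R) l <= m)%N.
Proof.
move=> A_normal A_gram s_bounds A_char.
have [s_ge s_le] : (forall j, smin <= s 0 j) /\ (forall j, s 0 j <= smax).
  by split=> j; case/andP: (s_bounds j).
have A_spectral : A = (spectralmx A) ^t* *m diag_mx (spectral_diag A) *m spectralmx A.
  by rewrite -invmx_unitary ?spectral_unitarymx //; apply/orthomx_spectralP.
have l_spectrum : perm_eq l [seq spectral_diag A 0 i | i <- enum 'I_k].
  by apply: prod_XsubC_eq; rewrite -A_char char_poly_normalmx // big_map big_enum.
split.
- move=> x; rewrite (perm_mem l_spectrum) => /mapP [i _ ->].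
  exact: (spectral_diag_ge A_gram (spectral_unitarymx A) A_spectral).
- rewrite (permP l_spectrum) count_map.
  apply: leq_trans (card_spectral_diag_gt A_gram (spectral_unitarymx A) A_spectral s_ge).
  by rewrite enumT cardE /enum_mem size_filter; apply/eq_leq/eq_count => i; rewrite !inE.
Qed.

Lemma sorted_ge_nth_le_count_gt disp (T : orderType disp) (x0 c : T) (l : seq T) n i :
  sorted (fun x y => (y <= x)%O) l -> (count (fun x => (c < x)%O) l <= n)%N ->
  (n <= i < size l)%N -> (nth x0 l i <= c)%O.
Proof.
move=> l_sorted l_count /andP [n_le_i i_lt]; rewrite leNgt; apply/negP => c_lt.
have take_gt : all (fun x => (c < x)%O) (take i.+1 l).
  apply/(all_nthP x0) => j; rewrite size_takel // => j_le_i; rewrite nth_take //.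
  apply: lt_le_trans c_lt _; apply: (sorted_leq_nth ge_trans lexx) => //.
  by rewrite inE (leq_trans j_le_i i_lt).
have : (i.+1 <= count (fun x => (c < x)%O) l)%N.
  rewrite -(cat_take_drop i.+1 l) count_cat; move: take_gt; rewrite all_count => /eqP ->.
  by rewrite size_takel ?leq_addr.
by rewrite ltnNge (leq_trans l_count n_le_i).
Qed.

Lemma size_sub_count_gt_leq_count_lt disp (T : orderType disp) (b c : T) (l : seq T) :
  (c < b)%O -> (size l - count (fun x => (c < x)%O) l <= count (fun x => (x < b)%O) l)%N.
Proof.
move=> c_lt_b; rewrite -(count_predC (fun x => (c < x)%O) l) addKn.
by apply: sub_count => x /=; rewrite -leNgt => /le_lt_trans; apply.
Qed.

Lemma sorted_geq_map_nth (T : Type) (f : T -> nat) (x0 : T) (s : seq T) j :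
  sorted geq (map f s) -> (j < size s)%N ->
  (f (nth x0 s (size s).-1) <= f (nth x0 s j) <= f (nth x0 s 0))%N.
Proof.
move=> s_sorted j_lt; have s_gt0 : (0 < size s)%N by apply: leq_ltn_trans j_lt.
have mono := sorted_leq_nth (fun _ _ _ h1 h2 => leq_trans h2 h1) leqnn 0 s_sorted.
rewrite -!(nth_map x0 0) ?prednK ?ltn_predL //.
by rewrite !mono ?inE ?size_map ?prednK ?ltn_predL // -ltnS prednK.
Qed.

Lemma clique_partition_card_setI_le1 (T : finType) (e : rel T) (F : seq {set T}) i j :
  is_clique_partition e F -> (i < size F)%N -> (j < size F)%N -> i != j ->
  (#|nth set0 F i :&: nth set0 F j| <= 1)%N.
Proof.
case=> F_uniq F_cliques F_edges i_lt j_lt ij.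
rewrite leqNgt; apply/card_gt1P => -[x [y [xC yC xy]]].
move: xC yC; rewrite !inE => /andP [xi xj] /andP [yi yj].
have [_ Ci_clique] := F_cliques _ (mem_nth set0 i_lt).
have := F_edges x y (Ci_clique x y xi yi xy).
have Ci_Cj : nth set0 F i != nth set0 F j by rewrite nth_uniq.
suff : (2 <= count (fun C : {set T} => (x \in C) && (y \in C)) F)%N.
  by move=> two_le one; rewrite one in two_le.
rewrite -size_filter -[2%N]/(size [:: nth set0 F i; nth set0 F j]).
apply: uniq_leq_size; first by rewrite /= inE Ci_Cj.
by move=> C; rewrite !inE => /orP [] /eqP ->; rewrite mem_filter ?xi ?yi ?xj ?yj mem_nth.
Qed.

Definition incidence_mx (R : nzRingType) (T : finType) (F : seq {set T}) :
  'M[R]_(size F, #|T|) := \matrix_(i, x) (enum_val x \in nth set0 F i)%:R.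

Definition clique_sizes (R : nzRingType) (T : finType) (F : seq {set T}) :
  'rV[R]_(size F) := \row_i #|nth set0 F i|%:R.

Lemma cp_adj_gram (R : nzRingType) (T : finType) (e : rel T) (F : seq {set T}) :
  is_clique_partition e F ->
  cp_adj R F + diag_mx (clique_sizes R F) = incidence_mx R F *m (incidence_mx R F)^T.
Proof.
move=> F_cp; apply/matrixP => i j; rewrite !mxE.
have -> : \sum_x incidence_mx R F i x * (incidence_mx R F)^T x j
    = #|nth set0 F i :&: nth set0 F j|%:R.
  under eq_bigr do rewrite !mxE.
  rewrite -(big_enum_val (A := T) (fun t => (t \in nth set0 F i)%:R * (t \in nth set0 F j)%:R)).
  rewrite -sum1_card natr_sum [RHS]big_mkcond /=.
  by apply: eq_bigr => t _; rewrite -natrM inE; do 2 case: (_ \in _).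
have [<-|ij] := eqVneq i j; first by rewrite setIid add0r mulr1n.
rewrite addr0 /= -card_gt0.
move: (clique_partition_card_setI_le1 F_cp (ltn_ord i) (ltn_ord j) ij).
by case: #|_| => [|[]].
Qed.

Lemma map_cp_adj (R S : nzRingType) (f : {rmorphism R -> S}) (T : finType)
    (F : seq {set T}) :
  map_mx f (cp_adj R F) = cp_adj S F.
Proof. by apply/matrixP => i j; rewrite !mxE rmorph_nat. Qed.

Lemma tr_cp_adj (R : nzRingType) (T : finType) (F : seq {set T}) :
  (cp_adj R F)^T = cp_adj R F.
Proof. by apply/matrixP => i j; rewrite !mxE eq_sym setIC. Qed.

Lemma cp_adj_normalmx (C : numClosedFieldType) (T : finType) (F : seq {set T}) :
  cp_adj C F \is normalmx.
Proof. by apply/normalmxP; rewrite tr_cp_adj map_cp_adj. Qed.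

Lemma cp_adj_eigenvalue_bounds (R : rcfType) (T : finType) (e : rel T)
    (F : seq {set T}) (lam : seq R) smin smax :
  is_clique_partition e F ->
  (forall i, i < size F -> smin <= #|nth set0 F i| <= smax)%N ->
  char_poly (cp_adj R F) = \prod_(x <- lam) ('X - x%:P) ->
  {in lam, forall x, - smax%:R <= x} /\ (count (fun x => (- smin%:R < x)%R) lam <= #|T|)%N.
Proof.
move=> F_cp F_sizes lam_char.
(* The spectral theorem needs an algebraically closed field, hence R[i]. *)
have lamC_char : char_poly (cp_adj R[i] F) = \prod_(x <- map (real_complex R) lam) ('X - x%:P).
  rewrite -(map_cp_adj (real_complex R)) -map_char_poly lam_char rmorph_prod big_map.
  by apply: eq_bigr => x _; exact: map_polyXsubC.
have N_gram : cp_adj R[i] F + diag_mx (clique_sizes R[i] F)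
    = incidence_mx R[i] F *m (incidence_mx R[i] F) ^t*.
  by rewrite (cp_adj_gram _ F_cp); congr (_ *m _); apply/matrixP => i x; rewrite !mxE conjC_nat.
have sizes_bounds j : smin%:R <= clique_sizes R[i] F 0 j <= smax%:R.
  by rewrite mxE !ler_nat; exact: F_sizes.
have [lam_ge lam_gt] := gram_eigenvalue_bounds (cp_adj_normalmx _ F) N_gram sizes_bounds lamC_char.
split.
- move=> x x_lam; rewrite -lecR rmorphN rmorph_nat; exact/lam_ge/map_f.
- apply: leq_trans lam_gt; rewrite count_map.
  by apply/eq_leq/eq_count => x /=; rewrite -ltcR rmorphN rmorph_nat.
Qed.

Theorem mainTheorem7 (R : realType) (T : finType) (e : rel T)
    (F : seq {set T}) (lam : seq R) :
  simple_graph e ->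
  is_clique_partition e F ->
  (#|T| < size F)%N ->
  sorted geq [seq #|C| | C : {set T} <- F] ->
  sorted (fun x y : R => y <= x) lam ->
  char_poly (cp_adj R F) = \prod_(x <- lam) ('X - x%:P) ->
  (forall i : nat, (#|T| <= i < size F)%N ->
      - (#|nth set0 F 0|)%:R <= nth 0 lam i /\
      nth 0 lam i <= - (#|nth set0 F (size F).-1|)%:R)
  /\ (size F - #|T| <= count (fun x : R => (x < 0)%R) lam)%N.
Proof.
move=> _ F_cp T_lt_F F_sorted lam_sorted lam_char.
have size_lam : size lam = size F.
  by have := size_char_poly (cp_adj R F); rewrite lam_char size_prod_XsubC => -[].
have F_sizes i : (i < size F)%N ->
    (#|nth set0 F (size F).-1| <= #|nth set0 F i| <= #|nth set0 F 0|)%N.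
  exact: (sorted_geq_map_nth set0 F_sorted).
have [lam_ge lam_gt] := cp_adj_eigenvalue_bounds F_cp F_sizes lam_char.
have last_gt0 : (0 < #|nth set0 F (size F).-1|)%N.
  have [_ F_cliques _] := F_cp.
  have last_lt : ((size F).-1 < size F)%N by rewrite ltn_predL (leq_ltn_trans _ T_lt_F).
  have [Ck_nz _] := F_cliques _ (mem_nth set0 last_lt).
  by rewrite card_gt0.
split=> [i /andP [T_le_i i_lt] | ].
  split; first by apply: lam_ge; rewrite mem_nth ?size_lam.
  by apply: sorted_ge_nth_le_count_gt lam_sorted lam_gt _; rewrite T_le_i size_lam.
rewrite -size_lam; apply: leq_trans (leq_sub2l _ lam_gt) (size_sub_count_gt_leq_count_lt _ _).
by rewrite oppr_lt0 ltr0n.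
Qed.
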